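(* Let $P_k$ denote the $k$-th Legendre polynomial, $k\in\mathbb N$. For every $n\in\mathbb N$, $j\in\{1,\dots,n\}$, $\mathfrak t_n\in\mathbb T(n)$, $\boldsymbol\varphi\in[0,\pi]^{n-1}$, $u\in S^2$, unit vector $\xi\in\mathbb R^3$, and every measurable $\mathrm B:S^2\to\mathbb{SO}(3)$ with $\mathrm B(u)e_3=u$, $$\int_{(0,2\pi)^{n-1}}P_k\big(\mathrm B(u)\mathrm O^*_{j,n}(\mathfrak t_n,\boldsymbol\varphi,\boldsymbol\theta)e_3\cdot\xi\big)\,u_{(0,2\pi)}^{\otimes(n-1)}(d\boldsymbol\theta)=P_k(u\cdot\xi)\,f^{(k)}_{j,n}(\mathfrak t_n,\boldsymbol\varphi),$$ where $f^{(k)}_{1,1}\equiv1$ and, for $n\ge2$, $f^{(k)}_{j,n}(\mathfrak t_n,\boldsymbol\varphi)=f^{(k)}_{j,n_l}(\mathfrak t_n^l,\boldsymbol\varphi^l)P_k(\cos\varphi_{n-1})$ for $j\le n_l$ and $f^{(k)}_{j,n}(\mathfrak t_n,\boldsymbol\varphi)=f^{(k)}_{j-n_l,n_r}(\mathfrak t_n^r,\boldsymbol\varphi^r)P_k(\sin\varphi_{n-1})$ for $j>n_l$.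
   Context: $e_3={}^t(0,0,1)$; $u_{(0,2\pi)}^{\otimes(n-1)}$ is the uniform probability on $(0,2\pi)^{n-1}$ (no integral if $n=1$). Trees: a McKean binary tree is a finite rooted tree in which every node has zero or two children, distinguished as left and right; leaves numbered $1,\dots,n$ left to right; $\mathbb T(n)$ those with $n$ leaves, $\mathfrak t_1$ the one-node tree; for $n\ge2$, $\mathfrak t_n^l,\mathfrak t_n^r$ are the subtrees rooted at the left and right child of the root, with $n_l$ and $n_r=n-n_l$ leaves. For $\boldsymbol\varphi=(\varphi_1,\dots,\varphi_{n-1})$: $\boldsymbol\varphi^l=(\varphi_1,\dots,\varphi_{n_l-1})$, $\boldsymbol\varphi^r=(\varphi_{n_l},\dots,\varphi_{n-2})$ (void if $n_l=1$, resp. $n_r=1$), and $\boldsymbol\theta^l,\boldsymbol\theta^r$ likewise for $\boldsymbol\theta\in(0,2\pi)^{n-1}$. $\mathrm M^l(\varphi,\theta)=\begin{pmatrix}-\cos\theta\cos\varphi&\sin\theta&\cos\theta\sin\varphi\\-\sin\theta\cos\varphi&-\cos\theta&\sin\theta\sin\varphi\\ \sin\varphi&0&\cos\varphi\end{pmatrix}$, $\mathrm M^r(\varphi,\theta)=\begin{pmatrix}\sin\theta&\cos\theta\sin\varphi&-\cos\theta\cos\varphi\\-\cos\theta&\sin\theta\sin\varphi&-\sin\theta\cos\varphi\\0&\cos\varphi&\sin\varphi\end{pmatrix}$. $\mathrm O^*_{1,1}\equiv\mathrm{Id}$ and, for $n\ge2$, $\mathrm O^*_{j,n}(\mathfrak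 t_n,\boldsymbol\varphi,\boldsymbol\theta)=\mathrm M^l(\varphi_{n-1},\theta_{n-1})\mathrm O^*_{j,n_l}(\mathfrak t_n^l,\boldsymbol\varphi^l,\boldsymbol\theta^l)$ for $j\le n_l$ and $=\mathrm M^r(\varphi_{n-1},\theta_{n-1})\mathrm O^*_{j-n_l,n_r}(\mathfrak t_n^r,\boldsymbol\varphi^r,\boldsymbol\theta^r)$ for $j>n_l$. *)

From Stdlib Require Import Reals Lra Lia ClassicalEpsilon.
Open Scope R_scope.

Record V3 := mkV3 { v1 : R; v2 : R; v3 : R }.
(* a matrix is given by its three rows *)
Record M3 := mkM3 { r1 : V3; r2 : V3; r3 : V3 }.

Definition dot (a b : V3) : R := v1 a * v1 b + v2 a * v2 b + v3 a * v3 b.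
Definition col1 (A : M3) : V3 := mkV3 (v1 (r1 A)) (v1 (r2 A)) (v1 (r3 A)).
Definition col2 (A : M3) : V3 := mkV3 (v2 (r1 A)) (v2 (r2 A)) (v2 (r3 A)).
Definition col3 (A : M3) : V3 := mkV3 (v3 (r1 A)) (v3 (r2 A)) (v3 (r3 A)).
Definition trM (A : M3) : M3 := mkM3 (col1 A) (col2 A) (col3 A).
Definition mv (A : M3) (x : V3) : V3 := mkV3 (dot (r1 A) x) (dot (r2 A) x) (dot (r3 A) x).
Definition mm (A B : M3) : M3 :=
  mkM3 (mkV3 (dot (r1 A) (col1 B)) (dot (r1 A) (col2 B)) (dot (r1 A) (col3 B)))
       (mkV3 (dot (r2 A) (col1 B)) (dot (r2 A) (col2 B)) (dot (r2 A) (col3 B)))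
       (mkV3 (dot (r3 A) (col1 B)) (dot (r3 A) (col2 B)) (dot (r3 A) (col3 B))).
Definition Id3 : M3 := mkM3 (mkV3 1 0 0) (mkV3 0 1 0) (mkV3 0 0 1).
Definition det3 (A : M3) : R :=
  let a := r1 A in let b := r2 A in let c := r3 A in
  v1 a * (v2 b * v3 c - v3 b * v2 c)
  - v2 a * (v1 b * v3 c - v3 b * v1 c)
  + v3 a * (v1 b * v2 c - v2 b * v1 c).
Definition SO3 (A : M3) : Prop := mm (trM A) A = Id3 /\ det3 A = 1.
Definition e3 : V3 := mkV3 0 0 1.
Definition unitv (x : V3) : Prop := dot x x = 1.

(** * Legendre polynomials, via Bonnet's recursion
    P_0 = 1, P_1 = x, (k+2) P_{k+2} = (2k+3) x P_{k+1} - (k+1) P_k. *)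
Fixpoint legendre_pair (k : nat) (x : R) : R * R :=
  match k with
  | O => (1, x)
  | S k' => let (a, b) := legendre_pair k' x in
            (b, ((2 * INR k' + 3) * x * b - (INR k' + 1) * a) / (INR k' + 2))
  end.
Definition legendre (k : nat) (x : R) : R := fst (legendre_pair k x).

Inductive tree : Type := Leaf : tree | Node : tree -> tree -> tree.
Fixpoint leaves (t : tree) : nat :=
  match t with Leaf => 1%nat | Node l r => (leaves l + leaves r)%nat end.

(** Parameter vectors phi = (phi_1,...,phi_{n-1}) are encoded as functions
    nat -> R, using indices 1..n-1 (other values are irrelevant).
    phi^l = (phi_1..phi_{n_l-1}) is phi itself (restricted), and
    phi^r = (phi_{n_l}..phi_{n-2}) is  i |-> phi (n_l - 1 + i). *)
Definition shiftp (nl : nat) (phi : nat -> R) : nat -> R :=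
  fun i => phi (nl - 1 + i)%nat.

Definition Ml (ph th : R) : M3 :=
  mkM3 (mkV3 (- cos th * cos ph) (sin th) (cos th * sin ph))
       (mkV3 (- sin th * cos ph) (- cos th) (sin th * sin ph))
       (mkV3 (sin ph) 0 (cos ph)).
Definition Mr (ph th : R) : M3 :=
  mkM3 (mkV3 (sin th) (cos th * sin ph) (- cos th * cos ph))
       (mkV3 (- cos th) (sin th * sin ph) (- sin th * cos ph))
       (mkV3 0 (cos ph) (sin ph)).

Fixpoint Ostar (t : tree) (j : nat) (phi th : nat -> R) : M3 :=
  match t with
  | Leaf => Id3
  | Node l r =>
      let nl := leaves l in
      let n := leaves t in
      if Nat.leb j nl
      then mm (Ml (phi (n - 1)%nat) (th (n - 1)%nat)) (Ostar l j phi th)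
      else mm (Mr (phi (n - 1)%nat) (th (n - 1)%nat))
              (Ostar r (j - nl) (shiftp nl phi) (shiftp nl th))
  end.

Fixpoint fcoef (k : nat) (t : tree) (j : nat) (phi : nat -> R) : R :=
  match t with
  | Leaf => 1
  | Node l r =>
      let nl := leaves l in
      let n := leaves t in
      if Nat.leb j nl
      then fcoef k l j phi * legendre k (cos (phi (n - 1)%nat))
      else fcoef k r (j - nl) (shiftp nl phi) * legendre k (sin (phi (n - 1)%nat))
  end.

(* Total Riemann integral: the value of RiemannInt if f is Riemann integrable
   on [a,b], and 0 otherwise. *)
Definition Rint (f : R -> R) (a b : R) : R :=
  match excluded_middle_informative
          (exists l, exists pr : Riemann_integrable f a b, RiemannInt pr = l) with
  | left H => proj1_sig (constructive_indefinite_description _ H)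
  | right _ => 0
  end.

Definition upd (th : nat -> R) (m : nat) (t : R) : nat -> R :=
  fun i => if Nat.eqb i m then t else th i.

(* avg_iter m F = integral of F(theta_1,...,theta_m) against the uniform
   probability on (0,2pi)^m, as an iterated (Riemann) integral. *)
Fixpoint avg_iter (m : nat) (F : (nat -> R) -> R) : R :=
  match m with
  | O => F (fun _ => 0)
  | S m' => avg_iter m'
      (fun th => / (2 * PI) * Rint (fun t => F (upd th m t)) 0 (2 * PI))
  end.

(* Write eta = B(u)^T xi; it is a unit vector with third coordinate u . xi, and
   B(u) O* e3 . xi = O* e3 . eta.  The theorem is thus the identity
     avg_theta P_k(O*_{j,n}(t, phi, theta) e3 . eta) = P_k(eta_3) f^{(k)}_{j,n}(t, phi)
   for every unit eta, proved by induction on the tree ([tree_average]).  At a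
   node, M^l(phi, theta) = (rotation by theta about e3) o (map depending on phi
   only), and similarly for M^r, so averaging over the root angle theta_{n-1}
   first is an instance of the averaged addition theorem
     (1/2pi) int_0^{2pi} P_k(pq + a cos t + b sin t) dt = P_k(p) P_k(q)
   for a^2 + b^2 = (1-p^2)(1-q^2).  The addition theorem is proved by computing
   all the Fourier modes of t |-> P_k(pq + r cos t) simultaneously by
   induction on k: Bonnet's recurrence turns into a three-term recurrence for
   the normalized products of derivatives of P_k ([mode_coef]). *)

From Stdlib Require Import Reals Lra Lia Factorial ClassicalEpsilon FunctionalExtensionality.
From Coquelicot Require Import Coquelicot.
Open Scope R_scope.

Lemma legendre_pair_spec k x : legendre_pair k x = (legendre k x, legendre (S k) x).
Proof.
  induction k as [|k IH]; [reflexivity|].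
  unfold legendre at 1 2; simpl legendre_pair at 1 2; rewrite IH.
  unfold legendre; simpl; rewrite IH; reflexivity.
Qed.

Lemma legendre_0 x : legendre 0 x = 1. Proof. reflexivity. Qed.
Lemma legendre_1 x : legendre 1 x = x. Proof. reflexivity. Qed.

Lemma INR_plus_2_neq0 k : INR k + 2 <> 0.
Proof. pose proof (pos_INR k); lra. Qed.

Lemma legendre_SS k x : legendre (S (S k)) x =
  ((2 * INR k + 3) * x * legendre (S k) x - (INR k + 1) * legendre k x) / (INR k + 2).
Proof. unfold legendre at 1; simpl legendre_pair; rewrite legendre_pair_spec; reflexivity. Qed.

(* Coquelicot's continuity lemmas, restated with the real operations so that
   they can be applied by higher-order pattern matching. *)
Lemma continuous_Rmult (f g : R -> R) x :
  continuous f x -> continuous g x -> continuous (fun y => f y * g y) x.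
Proof. apply (continuous_mult f g). Qed.
Lemma continuous_Rplus (f g : R -> R) x :
  continuous f x -> continuous g x -> continuous (fun y => f y + g y) x.
Proof. apply (continuous_plus f g). Qed.
Lemma continuous_Rminus (f g : R -> R) x :
  continuous f x -> continuous g x -> continuous (fun y => f y - g y) x.
Proof. apply (continuous_minus f g). Qed.
Lemma continuous_Ropp (f : R -> R) x : continuous f x -> continuous (fun y => - f y) x.
Proof. apply (continuous_opp f). Qed.
Lemma continuous_cos_of (f : R -> R) x : continuous f x -> continuous (fun y => cos (f y)) x.
Proof. apply continuous_cos_comp. Qed.
Lemma continuous_sin_of (f : R -> R) x : continuous f x -> continuous (fun y => sin (f y)) x.
Proof. intro H; apply (continuous_comp f sin); [exact H | apply continuous_sin]. Qed.

Ltac solve_continuity := repeat match goal with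
 | |- continuous (fun _ => ?c) _ => apply (continuous_const c)
 | |- continuous (fun y => y) _ => apply continuous_id
 | |- continuous (fun y => cos (@?a y)) _ => apply (continuous_cos_of a)
 | |- continuous (fun y => sin (@?a y)) _ => apply (continuous_sin_of a)
 | |- continuous (fun y => @?a y - @?b y) _ => apply (continuous_Rminus a b)
 | |- continuous (fun y => @?a y + @?b y) _ => apply (continuous_Rplus a b)
 | |- continuous (fun y => - @?a y) _ => apply (continuous_Ropp a)
 | |- continuous (fun y => @?a y * @?b y) _ => apply (continuous_Rmult a b)
 end.

Lemma legendre_continuous k x : continuous (legendre k) x.
Proof.
  enough (H : forall x, continuous (legendre k) x /\ continuous (legendre (S k)) x)
    by apply H.
  induction k as [|k IH]; intro y.
  - split; [apply (continuous_ext (fun _ => 1)) | apply (continuous_ext (fun y => y))];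
      try reflexivity; solve_continuity.
  - split; [apply IH|].
    apply (continuous_ext (fun y => ((2 * INR k + 3) * y * legendre (S k) y
                                     - (INR k + 1) * legendre k y) * / (INR k + 2))).
    { intro z; rewrite legendre_SS; reflexivity. }
    destruct (IH y); solve_continuity; assumption.
Qed.

Lemma legendre_comp_continuous k (f : R -> R) x :
  continuous f x -> continuous (fun y => legendre k (f y)) x.
Proof. intro H; apply (continuous_comp f); [exact H | apply legendre_continuous]. Qed.

(** Derivatives of Legendre polynomials.  [dlegendre k m] is defined by the
    recurrence P_{k+1}^{(m+1)} = x P_k^{(m+1)} + (k+m+1) P_k^{(m)} obtained by
    differentiating P_{k+1}' = x P_k' + (k+1) P_k; it is the m-th derivative of
    P_k, but only the recurrences proved below are ever used. *)
Fixpoint dlegendre (k m : nat) (x : R) : R :=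
  match k, m with
  | O, O => 1
  | O, S _ => 0
  | S _, O => legendre k x
  | S k', S m' => x * dlegendre k' m x + INR (k' + m) * dlegendre k' m' x
  end.

(* Reduces an equation to a ring identity by subtracting [c1 * H1 + c2 * H2]
   (resp. [c * H]) for equational hypotheses [H1], [H2] (resp. [H]). *)
Ltac linear_combination2 c1 H1 c2 H2 :=
  match type of H1 with ?a1 = ?b1 =>
  match type of H2 with ?a2 = ?b2 =>
    apply Rminus_diag_uniq; transitivity (c1 * (a1 - b1) + c2 * (a2 - b2));
    [ | rewrite (Rminus_diag_eq _ _ H1), (Rminus_diag_eq _ _ H2); ring ] end end.
Ltac linear_combination c H :=
  match type of H with ?a = ?b =>
    apply Rminus_diag_uniq; transitivity (c * (a - b));
    [ | rewrite (Rminus_diag_eq _ _ H); ring ] end.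

Lemma dlegendre_0 k x : dlegendre k 0 x = legendre k x.
Proof. destruct k; reflexivity. Qed.

Lemma dlegendre_SS k m x :
  dlegendre (S k) (S m) x = x * dlegendre k (S m) x + (INR k + INR m + 1) * dlegendre k m x.
Proof. simpl dlegendre at 1; rewrite plus_INR, S_INR; ring. Qed.

(* Derivatives of order above k vanish: P_k has degree k. *)
Lemma dlegendre_high k m x : (k < m)%nat -> dlegendre k m x = 0.
Proof.
  revert m; induction k as [|k IH]; intros m H.
  - destruct m; [lia | reflexivity].
  - destruct m as [|m]; [lia|]. rewrite dlegendre_SS, !IH by lia; ring.
Qed.

Lemma dlegendre_1 k x :
  (1 - x * x) * dlegendre k 1 x = (INR k + 1) * (x * legendre k x - legendre (S k) x).
Proof.
  induction k as [|k IH].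
  - simpl dlegendre; rewrite legendre_0, legendre_1; simpl INR; ring.
  - rewrite dlegendre_SS, dlegendre_0, legendre_SS, S_INR; simpl INR.
    linear_combination x IH. field; apply INR_plus_2_neq0.
Qed.

(* The m-times differentiated Legendre equation
   (1-x^2) y^{(m+2)} = 2(m+1) x y^{(m+1)} + ((m+1)m - k(k+1)) y^{(m)}. *)
Lemma dlegendre_ode k m x : (1 - x * x) * dlegendre k (S (S m)) x =
  2 * (INR m + 1) * x * dlegendre k (S m) x
  + ((INR m + 1) * INR m - INR k * (INR k + 1)) * dlegendre k m x.
Proof.
  revert m; induction k as [|k IH]; intros m.
  - destruct m; simpl; ring.
  - destruct m as [|m].
    + rewrite !dlegendre_SS, !dlegendre_0, !S_INR; simpl INR.
      pose proof (IH 0%nat) as H1; simpl INR in H1; rewrite dlegendre_0 in H1.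
      linear_combination2 x H1 (INR k + 0 + 1 + 1) (dlegendre_1 k x). ring.
    + rewrite !dlegendre_SS, !S_INR.
      pose proof (IH (S m)) as H1; rewrite S_INR in H1.
      linear_combination2 x H1 (INR k + (INR m + 1) + 1 + 1) (IH m). ring.
Qed.

Lemma dlegendre_lower k m x : dlegendre k (S m) x =
  x * dlegendre (S k) (S m) x - (INR k - INR m + 1) * dlegendre (S k) m x.
Proof.
  destruct m as [|m].
  - rewrite dlegendre_SS, !dlegendre_0; simpl INR.
    linear_combination 1 (dlegendre_1 k x). ring.
  - rewrite !dlegendre_SS, !S_INR.
    linear_combination 1 (dlegendre_ode k m x). ring.
Qed.

Lemma dlegendre_subtop K x : dlegendre (S K) K x = x * dlegendre (S K) (S K) x.
Proof.
  pose proof (dlegendre_ode (S K) K x) as H.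
  rewrite (dlegendre_high (S K) (S (S K))), S_INR in H by lia.
  assert (H2 : 2 * (INR K + 1) * (dlegendre (S K) K x - x * dlegendre (S K) (S K) x) = 0) by lra.
  apply Rmult_integral in H2; destruct H2 as [H2|H2]; [|lra].
  pose proof (pos_INR K); lra.
Qed.

(** The normalized products
      mode_coef k m p q = (k-m)!/(k+m)! P_k^{(m)}(p) P_k^{(m)}(q),
    which (times r^m) are the Fourier coefficients of t |-> P_k(pq + r cos t)
    when r^2 = (1-p^2)(1-q^2).  Their key property is a three-term
    recurrence in k mirroring Bonnet's recurrence. *)
Definition mode_coef (k m : nat) (p q : R) : R :=
  INR (fact (k - m)) / INR (fact (k + m)) * dlegendre k m p * dlegendre k m q.

Lemma INR_fact_pos n : 0 < INR (fact n).
Proof. apply lt_0_INR, lt_O_fact. Qed.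

Lemma mode_coef_high k m p q : (k < m)%nat -> mode_coef k m p q = 0.
Proof. intro H; unfold mode_coef; rewrite (dlegendre_high k m p H); ring. Qed.

Lemma mode_coef_0 k p q : mode_coef k 0 p q = legendre k p * legendre k q.
Proof.
  unfold mode_coef; rewrite !dlegendre_0, Nat.sub_0_r, Nat.add_0_r.
  field; apply Rgt_not_eq, INR_fact_pos.
Qed.

Lemma mode_coef_deg0 m p q : mode_coef 0 m p q = match m with O => 1 | S _ => 0 end.
Proof.
  destruct m; unfold mode_coef; simpl; field.
  apply not_0_INR; pose proof (lt_O_fact m); lia.
Qed.

Lemma mode_coef_deg1_S m p q : mode_coef 1 (S m) p q =
  p * q * mode_coef 0 (S m) p q
  + ((1 - p * p) * (1 - q * q) * mode_coef 0 (S (S m)) p q + mode_coef 0 m p q) / 2.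
Proof.
  rewrite !mode_coef_deg0; destruct m as [|m].
  - unfold mode_coef; simpl; field.
  - rewrite mode_coef_high by lia; field.
Qed.

Lemma mode_coef_rec_0 K p q : (INR K + 2) * mode_coef (S (S K)) 0 p q =
  (2 * INR K + 3) * (p * q * mode_coef (S K) 0 p q
                     + (1 - p * p) * (1 - q * q) * mode_coef (S K) 1 p q)
  - (INR K + 1) * mode_coef K 0 p q.
Proof.
  rewrite !mode_coef_0; unfold mode_coef.
  replace (S K - 1)%nat with K by lia; replace (S K + 1)%nat with (S (S K)) by lia.
  transitivity ((2 * INR K + 3) * (p * q * (legendre (S K) p * legendre (S K) q)
     + INR (fact K) / INR (fact (S (S K)))
       * ((1 - p * p) * dlegendre (S K) 1 p) * ((1 - q * q) * dlegendre (S K) 1 q))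
     - (INR K + 1) * (legendre K p * legendre K q)).
  2: { field; repeat split; apply Rgt_not_eq, INR_fact_pos. }
  rewrite !dlegendre_1, !legendre_SS, !fact_simpl, !mult_INR, !S_INR.
  field; pose proof (pos_INR K); pose proof (INR_fact_pos K); repeat split; lra.
Qed.

Definition mode_rec_holds (K m : nat) (p q : R) : Prop :=
  (INR K + 2) * mode_coef (S (S K)) (S m) p q =
  (2 * INR K + 3) * (p * q * mode_coef (S K) (S m) p q
     + ((1 - p * p) * (1 - q * q) * mode_coef (S K) (S (S m)) p q
        + mode_coef (S K) m p q) / 2)
  - (INR K + 1) * mode_coef K (S m) p q.

Lemma mode_rec_beyond K m p q : (S K < m)%nat -> mode_rec_holds K m p q.
Proof. intro H; unfold mode_rec_holds; rewrite !mode_coef_high by lia; field. Qed.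

Lemma mode_rec_top K p q : mode_rec_holds K (S K) p q.
Proof.
  unfold mode_rec_holds.
  rewrite (mode_coef_high (S K) (S (S K))), (mode_coef_high (S K) (S (S (S K)))),
    (mode_coef_high K) by lia.
  unfold mode_coef.
  rewrite (dlegendre_SS (S K) (S K) p), (dlegendre_SS (S K) (S K) q),
    !(dlegendre_high (S K) (S (S K))), !Nat.sub_diag by lia.
  replace (S (S K) + S (S K))%nat with (S (S (S K + S K))) by lia.
  rewrite !fact_simpl, !mult_INR, !S_INR, !plus_INR, !S_INR; simpl fact.
  field; pose proof (pos_INR K); pose proof (lt_O_fact (K + S K)).
  repeat split; try lra; apply not_0_INR; lia.
Qed.

Lemma mode_rec_diag K p q : mode_rec_holds K K p q.
Proof.
  unfold mode_rec_holds.
  rewrite (mode_coef_high (S K) (S (S K))), (mode_coef_high K) by lia.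
  unfold mode_coef.
  rewrite (dlegendre_SS (S K) K p), (dlegendre_SS (S K) K q), !dlegendre_subtop, !Nat.sub_diag.
  replace (S (S K) - S K)%nat with 1%nat by lia.
  replace (S K - K)%nat with 1%nat by lia.
  replace (S (S K) + S K)%nat with (S (S (S (K + K)))) by lia.
  replace (S K + S K)%nat with (S (S (K + K))) by lia.
  replace (S K + K)%nat with (S (K + K)) by lia.
  rewrite !fact_simpl, !mult_INR, !S_INR, !plus_INR; simpl fact; simpl INR.
  field; pose proof (pos_INR K); pose proof (INR_fact_pos (K + K)); repeat split; lra.
Qed.

(* Generic case m < K: eliminate the mode m+2 by the differentiated Legendre
   equation and the degree K by lowering, then compare factorials. *)
Lemma mode_rec_generic K m p q : (m < K)%nat -> mode_rec_holds K m p q.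
Proof.
  intro H; unfold mode_rec_holds, mode_coef.
  set (a := dlegendre (S K) (S (S m)) p); set (b := dlegendre (S K) (S (S m)) q).
  replace ((1 - p * p) * (1 - q * q) * (INR (fact (S K - S (S m))) / INR (fact (S K + S (S m))) * a * b))
    with (INR (fact (S K - S (S m))) / INR (fact (S K + S (S m))) * ((1 - p * p) * a) * ((1 - q * q) * b))
    by ring.
  unfold a, b; rewrite (dlegendre_ode (S K) m p), (dlegendre_ode (S K) m q).
  rewrite (dlegendre_SS (S K) m p), (dlegendre_SS (S K) m q),
    (dlegendre_lower K m p), (dlegendre_lower K m q).
  destruct (Nat.lt_exists_pred 0 (K - m)) as [d [Hd _]]; [lia|].
  assert (HK : K = (m + S d)%nat) by lia; subst K; clear H Hd.
  replace (S (S (m + S d)) - S m)%nat with (S (S d)) by lia.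
  replace (S (S (m + S d)) + S m)%nat with (S (S (S (S (m + m + d))))) by lia.
  replace (S (m + S d) - S m)%nat with (S d) by lia.
  replace (S (m + S d) + S m)%nat with (S (S (S (m + m + d)))) by lia.
  replace (S (m + S d) - S (S m))%nat with d by lia.
  replace (S (m + S d) + S (S m))%nat with (S (S (S (S (m + m + d))))) by lia.
  replace (S (m + S d) - m)%nat with (S (S d)) by lia.
  replace (S (m + S d) + m)%nat with (S (S (m + m + d))) by lia.
  replace ((m + S d) - S m)%nat with d by lia.
  replace ((m + S d) + S m)%nat with (S (S (m + m + d))) by lia.
  rewrite !fact_simpl, !mult_INR, !S_INR, !plus_INR, !S_INR.
  pose proof (INR_fact_pos d); pose proof (INR_fact_pos (m + m + d)).
  pose proof (pos_INR m); pose proof (pos_INR d).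
  field; repeat split; lra.
Qed.

Lemma mode_coef_rec K m p q : mode_rec_holds K m p q.
Proof.
  destruct (Nat.lt_trichotomy m K) as [H|[H|H]].
  - apply mode_rec_generic, H.
  - subst; apply mode_rec_diag.
  - destruct (Nat.eq_dec m (S K)) as [E|E].
    + subst; apply mode_rec_top.
    + apply mode_rec_beyond; lia.
Qed.

Lemma plus_R (x y : R) : plus x y = x + y. Proof. reflexivity. Qed.
Lemma scal_R (x y : R) : scal x y = x * y. Proof. reflexivity. Qed.
Lemma minus_R (x y : R) : minus x y = x - y. Proof. reflexivity. Qed.
Ltac to_R := match goal with |- ?a = ?b => change (@eq R a b) end;
  cbv beta; rewrite ?plus_R, ?scal_R, ?minus_R.

Lemma RInt_lin2 (f g : R -> R) a b c d : ex_RInt f a b -> ex_RInt g a b ->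
  RInt (fun x => c * f x + d * g x) a b = c * RInt f a b + d * RInt g a b.
Proof.
  intros Hf Hg; apply is_RInt_unique.
  exact (is_RInt_plus _ _ a b _ _ (is_RInt_scal _ a b c _ (RInt_correct f a b Hf))
                                  (is_RInt_scal _ a b d _ (RInt_correct g a b Hg))).
Qed.

Lemma RInt_lin3 (f g h : R -> R) a b c d :
  ex_RInt f a b -> ex_RInt g a b -> ex_RInt h a b ->
  RInt (fun x => c * f x + d * (g x + h x)) a b = c * RInt f a b + d * (RInt g a b + RInt h a b).
Proof.
  intros Hf Hg Hh; apply is_RInt_unique.
  exact (is_RInt_plus _ _ a b _ _ (is_RInt_scal _ a b c _ (RInt_correct f a b Hf))
           (is_RInt_scal _ a b d _
              (is_RInt_plus _ _ a b _ _ (RInt_correct g a b Hg) (RInt_correct h a b Hh)))).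
Qed.

Lemma RInt_scal_R (f : R -> R) a b c : ex_RInt f a b ->
  RInt (fun x => c * f x) a b = c * RInt f a b.
Proof.
  intro Hf; apply is_RInt_unique, (is_RInt_scal _ a b c _ (RInt_correct f a b Hf)).
Qed.

Lemma ex_RInt_continuous_R (f : R -> R) a b : (forall t, continuous f t) -> ex_RInt f a b.
Proof. intro H; apply (ex_RInt_continuous (V := R_CompleteNormedModule)); intros; apply H. Qed.

Definition zonal_arg (p q r t0 t : R) : R := p * q + r * cos (t - t0).

Definition fourier_mode (h : R -> R) (p q r t0 : R) (m : nat) : R :=
  RInt (fun t => h (zonal_arg p q r t0 t) * cos (INR m * (t - t0))) 0 (2 * PI).

Lemma ex_fourier_mode (h : R -> R) p q r t0 m : (forall y, continuous h y) ->
  ex_RInt (fun t => h (zonal_arg p q r t0 t) * cos (INR m * (t - t0))) 0 (2 * PI).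
Proof.
  intro Hh; apply ex_RInt_continuous_R; intro t; apply continuous_Rmult.
  - apply (continuous_comp (fun t => zonal_arg p q r t0 t) h); [|apply Hh].
    unfold zonal_arg; solve_continuity.
  - solve_continuity.
Qed.

Lemma fourier_mode_ext h1 h2 p q r t0 m :
  (forall y, h1 y = h2 y) -> fourier_mode h1 p q r t0 m = fourier_mode h2 p q r t0 m.
Proof. intro H; unfold fourier_mode; apply RInt_ext; intros; rewrite H; reflexivity. Qed.

Lemma fourier_mode_lin (f g : R -> R) a b p q r t0 m :
  (forall y, continuous f y) -> (forall y, continuous g y) ->
  fourier_mode (fun y => a * f y + b * g y) p q r t0 m
  = a * fourier_mode f p q r t0 m + b * fourier_mode g p q r t0 m.
Proof.
  intros Hf Hg; unfold fourier_mode.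
  rewrite <- RInt_lin2 by (apply ex_fourier_mode; assumption).
  apply RInt_ext; intros; to_R; ring.
Qed.

Lemma RInt_cos_mode m t0 : RInt (fun t => cos (INR m * (t - t0))) 0 (2 * PI) =
  match m with O => 2 * PI | S _ => 0 end.
Proof.
  destruct m as [|m].
  - rewrite (RInt_ext _ (fun _ => 1)), RInt_const; [to_R; ring|].
    intros; simpl INR; rewrite Rmult_0_l, cos_0; reflexivity.
  - assert (Hm : INR (S m) <> 0) by (apply not_0_INR; lia).
    set (F := fun t => sin (INR (S m) * (t - t0)) / INR (S m)).
    assert (HF : forall x, Rmin 0 (2 * PI) <= x <= Rmax 0 (2 * PI) ->
                   is_derive F x (cos (INR (S m) * (x - t0)))).
    { intros x _; unfold F; generalize (INR (S m)) Hm; intros c Hc.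
      auto_derive; [auto|]. to_R. unfold Rminus. field; assumption. }
    assert (Hc : forall x, Rmin 0 (2 * PI) <= x <= Rmax 0 (2 * PI) ->
                   continuous (fun t => cos (INR (S m) * (t - t0))) x).
    { intros x _; solve_continuity. }
    rewrite (is_RInt_unique _ _ _ _ (is_RInt_derive F _ 0 (2 * PI) HF Hc)).
    to_R; unfold F.
    replace (INR (S m) * (2 * PI - t0)) with (INR (S m) * (0 - t0) + 2 * INR (S m) * PI) by ring.
    rewrite sin_period; field; assumption.
Qed.

(* Multiplication by the argument shifts modes:
   x cos(mu) with x = pq + r cos u, using 2 cos u cos(mu) = cos((m+1)u) + cos((m-1)u). *)
Lemma fourier_mode_mul_x_S (h : R -> R) p q r t0 m : (forall y, continuous h y) ->
  fourier_mode (fun y => y * h y) p q r t0 (S m) =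
  p * q * fourier_mode h p q r t0 (S m)
  + r / 2 * (fourier_mode h p q r t0 (S (S m)) + fourier_mode h p q r t0 m).
Proof.
  intro Hh; unfold fourier_mode.
  rewrite <- RInt_lin3 by (apply ex_fourier_mode, Hh).
  apply RInt_ext; intros t _; to_R; unfold zonal_arg.
  rewrite !S_INR; remember (t - t0) as u.
  replace ((INR m + 1 + 1) * u) with ((INR m + 1) * u + u) by ring.
  replace (INR m * u) with ((INR m + 1) * u - u) by ring.
  rewrite (cos_plus ((INR m + 1) * u) u), (cos_minus ((INR m + 1) * u) u); field.
Qed.

Lemma fourier_mode_mul_x_0 (h : R -> R) p q r t0 : (forall y, continuous h y) ->
  fourier_mode (fun y => y * h y) p q r t0 0 =
  p * q * fourier_mode h p q r t0 0 + r * fourier_mode h p q r t0 1.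
Proof.
  intro Hh; unfold fourier_mode.
  rewrite <- RInt_lin2 by (apply ex_fourier_mode, Hh).
  apply RInt_ext; intros t _; to_R; unfold zonal_arg; simpl INR.
  rewrite Rmult_0_l, Rmult_1_l, cos_0; ring.
Qed.

(** Proof by induction on k: Bonnet's recurrence and the mode shift
    x cos(mu) turn into the recurrence of [mode_coef]. *)
Lemma fourier_legendre_deg0 p q r t0 m :
  fourier_mode (legendre 0) p q r t0 m = 2 * PI * r ^ m * mode_coef 0 m p q.
Proof.
  unfold fourier_mode.
  rewrite (RInt_ext _ (fun t => cos (INR m * (t - t0)))).
  - rewrite RInt_cos_mode, mode_coef_deg0; destruct m; simpl; ring.
  - intros; to_R; rewrite legendre_0; ring.
Qed.

(* Degree 1: P_1(x) = x P_0(x), one shift of modes. *)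
Lemma fourier_legendre_deg1 p q r t0 m : r * r = (1 - p * p) * (1 - q * q) ->
  fourier_mode (legendre 1) p q r t0 m = 2 * PI * r ^ m * mode_coef 1 m p q.
Proof.
  intro Hr.
  rewrite (fourier_mode_ext _ (fun y => y * legendre 0 y))
    by (intro; rewrite legendre_0, legendre_1; ring).
  destruct m as [|m].
  - rewrite fourier_mode_mul_x_0 by apply legendre_continuous.
    rewrite !fourier_legendre_deg0, (mode_coef_0 1), !mode_coef_deg0, !legendre_1; simpl; ring.
  - rewrite fourier_mode_mul_x_S by apply legendre_continuous.
    rewrite !fourier_legendre_deg0, mode_coef_deg1_S; simpl pow.
    replace (r * (r * r ^ m)) with (r ^ m * (r * r)) by ring.
    rewrite Hr; field.
Qed.

Lemma fourier_legendre p q r t0 : r * r = (1 - p * p) * (1 - q * q) ->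
  forall k m, fourier_mode (legendre k) p q r t0 m = 2 * PI * r ^ m * mode_coef k m p q.
Proof.
  intros Hr k.
  enough (H : forall m, fourier_mode (legendre k) p q r t0 m = 2 * PI * r ^ m * mode_coef k m p q
           /\ fourier_mode (legendre (S k)) p q r t0 m = 2 * PI * r ^ m * mode_coef (S k) m p q)
    by (intro m; exact (proj1 (H m))).
  induction k as [|k IH]; intro m.
  { split; [apply fourier_legendre_deg0 | apply fourier_legendre_deg1, Hr]. }
  split; [apply IH|].
  rewrite (fourier_mode_ext _ (fun y => ((2 * INR k + 3) / (INR k + 2)) * (y * legendre (S k) y)
                               + (- (INR k + 1) / (INR k + 2)) * legendre k y))
    by (intro y; rewrite legendre_SS; field; apply INR_plus_2_neq0).
  rewrite fourier_mode_lin; cycle 1.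
  { intro y; apply (continuous_Rmult (fun y => y)); [apply continuous_id | apply legendre_continuous]. }
  { apply legendre_continuous. }
  apply (Rmult_eq_reg_l (INR k + 2)); [|apply INR_plus_2_neq0].
  replace ((INR k + 2) * (2 * PI * r ^ m * mode_coef (S (S k)) m p q))
    with (2 * PI * r ^ m * ((INR k + 2) * mode_coef (S (S k)) m p q)) by ring.
  destruct m as [|m].
  - rewrite fourier_mode_mul_x_0 by apply legendre_continuous.
    rewrite (proj1 (IH 0%nat)), (proj2 (IH 0%nat)), (proj2 (IH 1%nat)), mode_coef_rec_0, <- Hr.
    simpl pow; field; apply INR_plus_2_neq0.
  - rewrite fourier_mode_mul_x_S by apply legendre_continuous.
    rewrite (proj1 (IH (S m))), (proj2 (IH (S m))), (proj2 (IH (S (S m)))), (proj2 (IH m)).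
    pose proof (mode_coef_rec k m p q) as Hrec; unfold mode_rec_holds in Hrec.
    rewrite Hrec, <- Hr; simpl pow; field; apply INR_plus_2_neq0.
Qed.

Lemma polar_coordinates a b :
  exists r t0, a = r * cos t0 /\ b = r * sin t0 /\ r * r = a * a + b * b.
Proof.
  set (r := sqrt (a * a + b * b)).
  assert (Hr2 : r * r = a * a + b * b) by (apply sqrt_sqrt; nra).
  assert (Hr0 : 0 <= r) by apply sqrt_pos.
  destruct (Req_dec r 0) as [Z|NZ].
  { exists 0, 0; rewrite Z in Hr2; split; [|split]; nra. }
  assert (Ha : -1 <= a / r <= 1).
  { split; apply (Rmult_le_reg_r r); try lra; field_simplify; try lra; nra. }
  assert (Hs : sqrt (1 - (a / r)²) = Rabs b / r).
  { replace (1 - (a / r)²) with ((b / r)²).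
    - rewrite sqrt_Rsqr_abs, Rabs_div, (Rabs_right r) by lra; reflexivity.
    - unfold Rsqr; field_simplify_eq; try lra; nra. }
  destruct (Rle_dec 0 b) as [Hb|Hb].
  - exists r, (acos (a / r)); rewrite cos_acos, sin_acos, Hs, Rabs_right by lra.
    split; [|split]; [field|field|]; lra.
  - exists r, (- acos (a / r)); rewrite cos_neg, sin_neg, cos_acos, sin_acos, Hs by lra.
    rewrite Rabs_left by lra; split; [|split]; [field|field|]; lra.
Qed.

Lemma Rint_RInt f a b : ex_RInt f a b -> Rint f a b = RInt f a b.
Proof.
  intro H; pose proof (ex_RInt_Reals_0 _ _ _ H) as pr.
  unfold Rint; destruct excluded_middle_informative as [e|n].
  - destruct constructive_indefinite_description as [l [pr' E]]; simpl.
    rewrite <- E, (RInt_Reals f a b pr'); reflexivity.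
  - exfalso; apply n; exists (RiemannInt pr), pr; reflexivity.
Qed.

Lemma Rint_ext f g a b : (forall t, f t = g t) -> Rint f a b = Rint g a b.
Proof. intro H; replace f with g; [reflexivity|]; apply functional_extensionality; auto. Qed.

Lemma Rint_const c : Rint (fun _ => c) 0 (2 * PI) = 2 * PI * c.
Proof. rewrite Rint_RInt by apply ex_RInt_const; rewrite RInt_const; to_R; ring. Qed.

(* Zeroth mode of [fourier_legendre]: if a^2 + b^2 = (1-p^2)(1-q^2), then
   (1/2pi) int_0^{2pi} P_k(pq + a cos t + b sin t) dt = P_k(p) P_k(q). *)
Lemma legendre_average k p q a b c : a * a + b * b = (1 - p * p) * (1 - q * q) ->
  / (2 * PI) * Rint (fun t => c * legendre k (p * q + a * cos t + b * sin t)) 0 (2 * PI)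
  = c * legendre k p * legendre k q.
Proof.
  intro Hab; destruct (polar_coordinates a b) as [r [t0 [Ha [Hb Hr]]]].
  rewrite Hab in Hr.
  pose proof (fourier_legendre p q r t0 Hr k 0) as HM; rewrite mode_coef_0 in HM.
  rewrite Rint_RInt.
  2: { apply ex_RInt_continuous_R; intro t; apply (continuous_Rmult (fun _ => c));
       [apply continuous_const | apply legendre_comp_continuous; solve_continuity]. }
  rewrite (RInt_ext _ (fun t => c * (legendre k (zonal_arg p q r t0 t) * cos (INR 0 * (t - t0))))).
  2: { intros t _; to_R; unfold zonal_arg; simpl INR.
       rewrite Rmult_0_l, cos_0, Rmult_1_r, cos_minus, Ha, Hb; do 2 f_equal; ring. }
  rewrite RInt_scal_R by (apply ex_fourier_mode, legendre_continuous).
  change (RInt _ 0 (2 * PI)) with (fourier_mode (legendre k) p q r t0 0).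
  rewrite HM; simpl pow; field; pose proof PI_RGT_0; lra.
Qed.

(** Geometry of the matrices M^l, M^r: each factors as a rotation about e3
    by theta after an orthogonal map depending only on phi. *)

Lemma mv_mm A B x : mv (mm A B) x = mv A (mv B x).
Proof.
  destruct A as [[a1 a2 a3] [a4 a5 a6] [a7 a8 a9]].
  destruct B as [[b1 b2 b3] [b4 b5 b6] [b7 b8 b9]]; destruct x as [x1 x2 x3].
  unfold mv, mm, dot, col1, col2, col3; simpl; f_equal; ring.
Qed.

Lemma mv_Id x : mv Id3 x = x.
Proof. destruct x; unfold mv, Id3, dot; simpl; f_equal; ring. Qed.

Lemma dot_e3 x : dot e3 x = v3 x.
Proof. destruct x; unfold dot, e3; simpl; ring. Qed.

Lemma e3_unit : dot e3 e3 = 1.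
Proof. unfold dot, e3; simpl; ring. Qed.

Lemma sin_cos_sq t : sin t * sin t + cos t * cos t = 1.
Proof. pose proof (sin2_cos2 t) as H; unfold Rsqr in H; lra. Qed.

Definition rot_e3 (t : R) (v : V3) : V3 :=
  mkV3 (cos t * v1 v - sin t * v2 v) (sin t * v1 v + cos t * v2 v) (v3 v).
Definition tilt_left (ph : R) (w : V3) : V3 :=
  mkV3 (- cos ph * v1 w + sin ph * v3 w) (- v2 w) (sin ph * v1 w + cos ph * v3 w).
Definition tilt_right (ph : R) (w : V3) : V3 :=
  mkV3 (sin ph * v2 w - cos ph * v3 w) (- v1 w) (cos ph * v2 w + sin ph * v3 w).
(* The third rows of M^l and M^r. *)
Definition axis_left (ph : R) : V3 := mkV3 (sin ph) 0 (cos ph).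
Definition axis_right (ph : R) : V3 := mkV3 0 (cos ph) (sin ph).

Lemma Ml_factor ph t w : mv (Ml ph t) w = rot_e3 t (tilt_left ph w).
Proof. destruct w; unfold mv, Ml, rot_e3, tilt_left, dot; simpl; f_equal; ring. Qed.
Lemma Mr_factor ph t w : mv (Mr ph t) w = rot_e3 t (tilt_right ph w).
Proof. destruct w; unfold mv, Mr, rot_e3, tilt_right, dot; simpl; f_equal; ring. Qed.

Lemma tilt_left_height ph w : v3 (tilt_left ph w) = dot w (axis_left ph).
Proof. destruct w; unfold tilt_left, axis_left, dot; simpl; ring. Qed.
Lemma tilt_right_height ph w : v3 (tilt_right ph w) = dot w (axis_right ph).
Proof. destruct w; unfold tilt_right, axis_right, dot; simpl; ring. Qed.

Lemma axis_left_unit ph : dot (axis_left ph) (axis_left ph) = 1.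
Proof. unfold axis_left, dot; simpl; rewrite <- (sin_cos_sq ph); ring. Qed.
Lemma axis_right_unit ph : dot (axis_right ph) (axis_right ph) = 1.
Proof. unfold axis_right, dot; simpl; rewrite <- (sin_cos_sq ph); ring. Qed.

Lemma rot_e3_norm t v : dot (rot_e3 t v) (rot_e3 t v) = dot v v.
Proof.
  destruct v as [x y z]; unfold rot_e3, dot; simpl.
  transitivity ((sin t * sin t + cos t * cos t) * (x * x + y * y) + z * z); [ring|].
  rewrite sin_cos_sq; ring.
Qed.
Lemma tilt_left_norm ph w : dot (tilt_left ph w) (tilt_left ph w) = dot w w.
Proof.
  destruct w as [x y z]; unfold tilt_left, dot; simpl.
  transitivity ((sin ph * sin ph + cos ph * cos ph) * (x * x + z * z) + y * y); [ring|].
  rewrite sin_cos_sq; ring.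
Qed.
Lemma tilt_right_norm ph w : dot (tilt_right ph w) (tilt_right ph w) = dot w w.
Proof.
  destruct w as [x y z]; unfold tilt_right, dot; simpl.
  transitivity ((sin ph * sin ph + cos ph * cos ph) * (y * y + z * z) + x * x); [ring|].
  rewrite sin_cos_sq; ring.
Qed.

Lemma rotation_average k c v eta : dot v v = 1 -> dot eta eta = 1 ->
  / (2 * PI) * Rint (fun t => c * legendre k (dot (rot_e3 t v) eta)) 0 (2 * PI)
  = c * legendre k (v3 v) * legendre k (v3 eta).
Proof.
  intros Hv He; destruct v as [x y z], eta as [a b e]; unfold dot in Hv, He; simpl in Hv, He.
  replace (fun t => c * legendre k (dot (rot_e3 t (mkV3 x y z)) (mkV3 a b e)))
    with (fun t => c * legendre k (z * e + (x * a + y * b) * cos t + (x * b - y * a) * sin t)).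
  - apply legendre_average.
    transitivity ((x * x + y * y) * (a * a + b * b)); [ring|].
    replace (x * x + y * y) with (1 - z * z) by lra.
    replace (a * a + b * b) with (1 - e * e) by lra; simpl; ring.
  - apply functional_extensionality; intro t; unfold rot_e3, dot; simpl; do 2 f_equal; ring.
Qed.

(* One step of the induction over trees: averaging the root angle of a left
   (resp. right) branch produces P_k(cos phi) (resp. P_k(sin phi)), through
   the axis of the branch. *)
Lemma root_average_left k c ph w eta : dot w w = 1 -> dot eta eta = 1 ->
  / (2 * PI) * Rint (fun t => c * legendre k (dot (mv (Ml ph t) w) eta)) 0 (2 * PI)
  = c * legendre k (v3 eta) * legendre k (dot w (axis_left ph)).
Proof.
  intros Hw He.
  rewrite (Rint_ext _ (fun t => c * legendre k (dot (rot_e3 t (tilt_left ph w)) eta)))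
    by (intro; rewrite Ml_factor; reflexivity).
  rewrite rotation_average, tilt_left_height; [ring | rewrite tilt_left_norm; exact Hw | exact He].
Qed.

Lemma root_average_right k c ph w eta : dot w w = 1 -> dot eta eta = 1 ->
  / (2 * PI) * Rint (fun t => c * legendre k (dot (mv (Mr ph t) w) eta)) 0 (2 * PI)
  = c * legendre k (v3 eta) * legendre k (dot w (axis_right ph)).
Proof.
  intros Hw He.
  rewrite (Rint_ext _ (fun t => c * legendre k (dot (rot_e3 t (tilt_right ph w)) eta)))
    by (intro; rewrite Mr_factor; reflexivity).
  rewrite rotation_average, tilt_right_height; [ring | rewrite tilt_right_norm; exact Hw | exact He].
Qed.

(** Iterated averages over the angles.  [avg_range a m F th] averages F over
    theta_{a+1}, ..., theta_{a+m} (uniformly on (0,2pi), innermost the last),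
    the other angles being those of [th]. *)
Fixpoint avg_range (a m : nat) (F : (nat -> R) -> R) (th : nat -> R) : R :=
  match m with
  | O => F th
  | S m' => avg_range a m'
      (fun th' => / (2 * PI) * Rint (fun t => F (upd th' (a + S m') t)) 0 (2 * PI)) th
  end.

Lemma avg_iter_range m F : avg_iter m F = avg_range 0 m F (fun _ => 0).
Proof. revert F; induction m as [|m IH]; intro F; [reflexivity | apply IH]. Qed.

Lemma avg_range_ext a m F G th : (forall th', F th' = G th') -> avg_range a m F th = avg_range a m G th.
Proof. intro H; replace F with G; [reflexivity|]; apply functional_extensionality; auto. Qed.

Lemma avg_range_split a m1 m2 F th :
  avg_range a (m1 + m2) F th = avg_range a m1 (avg_range (a + m1) m2 F) th.
Proof.
  revert F th; induction m2 as [|m2 IH]; intros F th.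
  - rewrite Nat.add_0_r; reflexivity.
  - rewrite Nat.add_succ_r; simpl avg_range at 1; rewrite IH; simpl avg_range at 2.
    replace (a + S (m1 + m2))%nat with (a + m1 + S m2)%nat by lia; reflexivity.
Qed.

Lemma avg_range_const a m G th :
  (forall th' i x, (a < i)%nat -> G (upd th' i x) = G th') -> avg_range a m G th = G th.
Proof.
  revert G th; induction m as [|m IH]; intros G th HG; [reflexivity|].
  simpl avg_range; rewrite (avg_range_ext _ _ _ G); [apply IH, HG|].
  intro th'; rewrite (Rint_ext _ (fun _ => G th')) by (intro; apply HG; lia).
  rewrite Rint_const; field; pose proof PI_RGT_0; lra.
Qed.

Lemma shiftp_upd nl th i x : (nl - 1 <= i)%nat ->
  shiftp nl (upd th i x) = upd (shiftp nl th) (i - (nl - 1)) x.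
Proof.
  intro H; apply functional_extensionality; intro p; unfold shiftp, upd.
  destruct (Nat.eqb_spec (nl - 1 + p) i), (Nat.eqb_spec p (i - (nl - 1))); auto; lia.
Qed.

Lemma avg_range_shift nl m H th :
  avg_range (nl - 1) m (fun th' => H (shiftp nl th')) th = avg_range 0 m H (shiftp nl th).
Proof.
  revert H th; induction m as [|m IH]; intros H th; [reflexivity|].
  simpl avg_range; rewrite <- IH; apply avg_range_ext; intro th'.
  rewrite (Rint_ext _ (fun t => H (upd (shiftp nl th') (S m) t))); [reflexivity|].
  intro t; rewrite shiftp_upd by lia; do 3 f_equal; lia.
Qed.

Lemma avg_range_node nl nr F th : (1 <= nl)%nat -> (1 <= nr)%nat ->
  avg_range 0 (nl + nr - 1) F th =
  avg_range 0 (nl - 1) (avg_range (nl - 1) (nr - 1)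
    (fun th' => / (2 * PI) * Rint (fun t => F (upd th' (nl + nr - 1) t)) 0 (2 * PI))) th.
Proof.
  intros Hl Hr; replace (nl + nr - 1)%nat with (S ((nl - 1) + (nr - 1))) at 1 by lia.
  simpl avg_range; rewrite avg_range_split; simpl Nat.add.
  do 2 f_equal; apply functional_extensionality; intro th'.
  do 2 f_equal; apply functional_extensionality; intro t; do 2 f_equal; lia.
Qed.

Lemma leaves_pos t : (1 <= leaves t)%nat.
Proof. induction t; simpl; lia. Qed.

Lemma Ostar_norm t j phi th x :
  dot (mv (Ostar t j phi th) x) (mv (Ostar t j phi th) x) = dot x x.
Proof.
  revert j phi th x; induction t as [|l IHl r IHr]; intros j phi th x.
  - simpl; rewrite mv_Id; reflexivity.
  - simpl Ostar; destruct (Nat.leb j (leaves l)); rewrite mv_mm.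
    + rewrite Ml_factor, rot_e3_norm, tilt_left_norm; apply IHl.
    + rewrite Mr_factor, rot_e3_norm, tilt_right_norm; apply IHr.
Qed.

Lemma Ostar_upd t j phi th i x : (leaves t <= i)%nat ->
  Ostar t j phi (upd th i x) = Ostar t j phi th.
Proof.
  revert j phi th i; induction t as [|l IHl r IHr]; intros j phi th i H; [reflexivity|].
  simpl leaves in H; pose proof (leaves_pos l); pose proof (leaves_pos r).
  simpl Ostar.
  replace (upd th i x (leaves l + leaves r - 1)%nat) with (th (leaves l + leaves r - 1)%nat)
    by (unfold upd; destruct (Nat.eqb_spec (leaves l + leaves r - 1) i); [lia | reflexivity]).
  destruct (Nat.leb j (leaves l)).
  - rewrite IHl by lia; reflexivity.
  - rewrite shiftp_upd, IHr by lia; reflexivity.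
Qed.

(* The theorem for the rotated direction eta = B(u)^T xi: by induction on the
   tree, averaging the root angle first and then each subtree's block. *)
Lemma tree_average k t : forall j phi eta th c, dot eta eta = 1 ->
  avg_range 0 (leaves t - 1) (fun th' => c * legendre k (dot (mv (Ostar t j phi th') e3) eta)) th
  = c * legendre k (v3 eta) * fcoef k t j phi.
Proof.
  induction t as [|l IHl r IHr]; intros j phi eta th c He.
  { simpl; rewrite mv_Id, dot_e3; ring. }
  pose proof (leaves_pos l); pose proof (leaves_pos r).
  simpl leaves; rewrite avg_range_node by assumption.
  simpl fcoef; simpl Ostar; set (nl := leaves l); set (ph := phi (nl + leaves r - 1)%nat).
  destruct (Nat.leb j nl).
  - (* left branch: the inner average only sees the angles of the left subtree *)
    set (c' := c * legendre k (v3 eta)).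
    set (G := fun s => c' * legendre k (dot (mv (Ostar l j phi s) e3) (axis_left ph))).
    rewrite (avg_range_ext _ _ _ (fun th' => avg_range (nl - 1) (leaves r - 1) G th')).
    2: { intro th'; apply avg_range_ext; intro s.
         rewrite (Rint_ext _ (fun t => c * legendre k (dot (mv (Ml ph t)
              (mv (Ostar l j phi s) e3)) eta))).
         - rewrite root_average_left; [reflexivity | rewrite Ostar_norm; apply e3_unit | exact He].
         - intro t; unfold upd at 1; rewrite Nat.eqb_refl, mv_mm, Ostar_upd by lia.
           reflexivity. }
    rewrite (avg_range_ext _ _ _ G)
      by (intro; apply avg_range_const; intros; unfold G; rewrite Ostar_upd by lia; reflexivity).
    unfold G; rewrite IHl by apply axis_left_unit; unfold c', axis_left; simpl; ring.
  - (* right branch: the inner average is the right subtree's, after a shift *)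
    set (c' := c * legendre k (v3 eta)).
    set (G := fun s => c' * legendre k
                (dot (mv (Ostar r (j - nl) (shiftp nl phi) s) e3) (axis_right ph))).
    rewrite (avg_range_ext _ _ _
               (fun _ => c' * legendre k (v3 (axis_right ph)) * fcoef k r (j - nl) (shiftp nl phi))).
    2: { intro th'; rewrite (avg_range_ext _ _ _ (fun s => G (shiftp nl s))).
         - rewrite avg_range_shift; unfold G; apply IHr, axis_right_unit.
         - intro s; rewrite (Rint_ext _ (fun t => c * legendre k (dot (mv (Mr ph t)
              (mv (Ostar r (j - nl) (shiftp nl phi) (shiftp nl s)) e3)) eta))).
           + rewrite root_average_right; [reflexivity | rewrite Ostar_norm; apply e3_unit | exact He].
           + intro t; unfold upd at 1; rewrite Nat.eqb_refl, mv_mm, shiftp_upd, Ostar_upd by lia.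
             reflexivity. }
    rewrite avg_range_const by reflexivity; unfold c', axis_right; simpl; ring.
Qed.

(** Rotations: a matrix of SO(3) has its transpose as a two-sided inverse,
    hence its transpose maps unit vectors to unit vectors. *)

Definition cross (x y : V3) : V3 :=
  mkV3 (v2 x * v3 y - v3 x * v2 y) (v3 x * v1 y - v1 x * v3 y) (v1 x * v2 y - v2 x * v1 y).
Definition adj3 (A : M3) : M3 :=
  trM (mkM3 (cross (r2 A) (r3 A)) (cross (r3 A) (r1 A)) (cross (r1 A) (r2 A))).

Lemma mm_assoc A B C : mm (mm A B) C = mm A (mm B C).
Proof.
  destruct A as [[a1 a2 a3] [a4 a5 a6] [a7 a8 a9]], B as [[b1 b2 b3] [b4 b5 b6] [b7 b8 b9]],
    C as [[c1 c2 c3] [c4 c5 c6] [c7 c8 c9]].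
  unfold mm, dot, col1, col2, col3; simpl; f_equal; f_equal; ring.
Qed.

Lemma mm_Id_l A : mm Id3 A = A.
Proof. destruct A as [[] [] []]; unfold mm, Id3, dot, col1, col2, col3; simpl; f_equal; f_equal; ring. Qed.

Lemma mm_Id_r A : mm A Id3 = A.
Proof. destruct A as [[] [] []]; unfold mm, Id3, dot, col1, col2, col3; simpl; f_equal; f_equal; ring. Qed.

Lemma trM_involutive A : trM (trM A) = A.
Proof. destruct A as [[] [] []]; reflexivity. Qed.

Lemma mm_adj3 A : det3 A = 1 -> mm A (adj3 A) = Id3.
Proof.
  destruct A as [[a1 a2 a3] [a4 a5 a6] [a7 a8 a9]]; unfold det3; simpl; intro D.
  unfold mm, adj3, trM, cross, dot, col1, col2, col3, Id3; simpl.
  rewrite <- D; f_equal; f_equal; ring.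
Qed.

(* A^T A = Id and det A = 1 force A^T = adj(A), hence A A^T = Id. *)
Lemma SO3_right_inverse A : SO3 A -> mm A (trM A) = Id3.
Proof.
  intros [HtA D].
  assert (E : trM A = adj3 A).
  { rewrite <- (mm_Id_r (trM A)), <- (mm_adj3 A D), <- mm_assoc, HtA; apply mm_Id_l. }
  rewrite E; apply mm_adj3, D.
Qed.

Lemma dot_mv_transpose A y x : dot (mv A y) x = dot y (mv (trM A) x).
Proof.
  destruct A as [[a b c] [d e f] [g h i]], y, x.
  unfold mv, trM, col1, col2, col3, dot; simpl; ring.
Qed.

Lemma SO3_transpose_unit A x : SO3 A -> dot x x = 1 -> dot (mv (trM A) x) (mv (trM A) x) = 1.
Proof.
  intros HA Hx.
  rewrite dot_mv_transpose, trM_involutive, <- mv_mm, SO3_right_inverse, mv_Id by exact HA.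
  exact Hx.
Qed.

(** Main theorem.  Writing B(u) O* e3 . xi = O* e3 . eta with the unit vector
    eta = B(u)^T xi, whose third coordinate is u . xi, it is [tree_average]. *)
Theorem mainTheorem10 (k n j : nat) (t : tree) (phi : nat -> R)
  (u xi : V3) (B : V3 -> M3) :
  leaves t = n ->
  (1 <= j <= n)%nat ->
  (forall i : nat, (1 <= i <= n - 1)%nat -> 0 <= phi i <= PI) ->
  unitv u -> unitv xi ->
  (forall v : V3, unitv v -> SO3 (B v) /\ mv (B v) e3 = v) ->
  avg_iter (n - 1)
    (fun th => legendre k (dot (mv (mm (B u) (Ostar t j phi th)) e3) xi))
  = legendre k (dot u xi) * fcoef k t j phi.
Proof.
  intros Hn _ _ Hu Hxi HB.
  destruct (HB u Hu) as [HSO Hue3].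
  set (eta := mv (trM (B u)) xi).
  assert (Heta : dot u xi = v3 eta) by (rewrite <- Hue3, dot_mv_transpose, dot_e3; reflexivity).
  rewrite avg_iter_range,
    (avg_range_ext _ _ _ (fun th => 1 * legendre k (dot (mv (Ostar t j phi th) e3) eta))).
  - subst n; rewrite tree_average, Heta by (apply SO3_transpose_unit; assumption); ring.
  - intro th; rewrite mv_mm, dot_mv_transpose; fold eta; ring.
Qed.
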